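(* Let $R$ be a finite chain ring, $r\ge1$, $l\ge1$, and let $A_1,\dots,A_l\subseteq R$ be pairwise disjoint sets with $|A_i|=r+1$ such that $A=\bigcup_{i=1}^lA_i$ is well-conditioned. Let $g\in R[x]$ be an $(r,l)$-good polynomial on the blocks $A_1,\dots,A_l$. Let $1\le t\le l$, $n=(r+1)l$, $K=rt$. For $a=(a_{i,j})_{0\le i\le r-1,\,0\le j\le t-1}\in R^K$ put $$f_a(x)=\sum_{i=0}^{r-1}\sum_{j=0}^{t-1}a_{i,j}\,g(x)^jx^i,$$ and let $\mathcal C=\{(f_a(\alpha))_{\alpha\in A}: a\in R^K\}\subseteq R^n$ (coordinates indexed by $A$ in a fixed order). Then $\mathcal C$ is a free $R$-linear code of length $n$ and rank $K$ (so $|\mathcal C|=|R|^K$), every coordinate $\alpha\in A_j$ has the recovering set $A_j\setminus\{\alpha\}$ (so $\mathcal C$ has locality $r$), and its minimum distance is $$d=n-K-\frac{K}{r}+2 .$$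
   Context: A finite chain ring is a finite commutative local ring whose ideals are totally ordered by inclusion. $N(R)$ denotes the group of units of $R$. A subset $T\subseteq N(R)$ is subtractive if $a-b\in N(R)$ for all distinct $a,b\in T$. A set $\{a_1,\dots,a_n\}\subseteq R$ is well-conditioned if either it is a subtractive subset of $N(R)$, or for some $i$ the set $\{a_1,\dots,a_n\}\setminus\{a_i\}$ is a subtractive subset of $N(R)$ and $a_i$ is a zero divisor (or $a_i=0$). Given pairwise disjoint subsets $A_1,\dots,A_l\subseteq R$ of size $r+1$, a polynomial $g\in R[x]$ is $(r,l)$-good on the blocks $A_1,\dots,A_l$ if it has degree $r+1$, its leading coefficient is a unit, and it is constant on each $A_i$. A coordinate $i$ has locality $r$ if there is a set $S_i$ of at most $r$ other coordinates with $|\mathcal C_{S_i}|=|\mathcal C_{S_i\cup\{i\}}|$ (puncturing to the indicated coordinates). *)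

From HB Require Import structures.
From mathcomp Require Import all_boot all_order all_algebra.
Set Implicit Arguments. Unset Strict Implicit. Unset Printing Implicit Defensive.
Import Order.TTheory GRing.Theory.
Local Open Scope ring_scope.

Section ChainRings.
Variable R : finComUnitRingType.

Definition is_ideal (I : {set R}) : Prop :=
  0 \in I /\ {in I &, forall x y, x + y \in I} /\
  (forall a : R, {in I, forall x, a * x \in I}).

Definition proper_ideal (I : {set R}) : Prop := is_ideal I /\ (1 \notin I).

Definition local_ring : Prop :=
  exists M : {set R}, proper_ideal M /\
    forall I, proper_ideal I -> I \subset M.

Definition chain_ring : Prop :=
  local_ring /\
  forall I J : {set R}, is_ideal I -> is_ideal J -> I \subset J \/ J \subset I.

Definition subtractive (T : {set R}) : Prop :=
  (forall a, a \in T -> a \is a GRing.unit) /\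
  (forall a b, a \in T -> b \in T -> a != b -> (a - b) \is a GRing.unit).

Definition zero_divisor (a : R) : Prop := exists b : R, b != 0 /\ a * b = 0.

Definition well_conditioned (A : {set R}) : Prop :=
  subtractive A \/
  exists2 a, a \in A & subtractive (A :\ a) /\ (zero_divisor a \/ a = 0).

Definition good_poly (r l : nat) (Ab : 'I_l -> {set R}) (g : {poly R}) : Prop :=
  size g = r.+2 /\ lead_coef g \is a GRing.unit /\
  forall i, {in Ab i &, forall x y, g.[x] = g.[y]}.

Definition wt n (c : 'rV[R]_n) : nat := #|[set k : 'I_n | c 0 k != 0]|.

Definition free_code_of_rank n (C : {set 'rV[R]_n}) (K : nat) : Prop :=
  exists B : 'I_K -> 'rV[R]_n,
    (forall c, c \in C <-> exists u : 'I_K -> R, c = \sum_(k < K) u k *: B k) /\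
    (forall u : 'I_K -> R, \sum_(k < K) u k *: B k = 0 -> forall k, u k = 0).

Definition puncture n (C : {set 'rV[R]_n}) (S : {set 'I_n}) : {set 'rV[R]_n} :=
  [set \row_(k < n) (if k \in S then c 0 k else 0) | c : 'rV[R]_n in C].

Definition recovering_set n (C : {set 'rV[R]_n}) (i : 'I_n) (S : {set 'I_n}) : Prop :=
  i \notin S /\ #|puncture C S| = #|puncture C (i |: S)|.

Definition has_locality n (C : {set 'rV[R]_n}) (r : nat) : Prop :=
  forall i : 'I_n, exists S : {set 'I_n}, (#|S| <= r)%N /\ recovering_set C i S.

Definition min_distance_is n (C : {set 'rV[R]_n}) (d : nat) : Prop :=
  (exists2 c, c \in C & c != 0 /\ wt c = d) /\
  (forall c, c \in C -> c != 0 -> (d <= wt c)%N).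

Definition fpoly (r t : nat) (g : {poly R}) (a : 'I_r * 'I_t -> R) : {poly R} :=
  \sum_(i < r) \sum_(j < t) a (i, j) *: (g ^+ j * 'X^i).

End ChainRings.

From Pilot Require Import Defs.
From mathcomp Require Import all_boot all_order all_algebra.
From mathcomp Require Import zify ring.
Import GRing.Theory.
Local Open Scope ring_scope.
Set Implicit Arguments. Unset Strict Implicit. Unset Printing Implicit Defensive.

(* Distinct points of A differ by units (a well-conditioned set in a local ring), so a
   nonzero polynomial of size s has fewer than s zeros on A.  The degrees j(r+1)+i of the
   monomials g^j x^i are pairwise distinct, so f_a = 0 forces a = 0, and deg f_a <= K+t-2 < n;
   this gives freeness, |C| = |R|^K and the weight bound n-K-t+2.  On a block A_j the
   polynomial g is a constant c, so there f_a agrees with a polynomial of degree < r in x,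
   determined by its values at the r other points of the block: this is locality.  Finally
   G(x) F(g(x)), with G vanishing at r-1 points of one block and F at the values of g on t-1
   other blocks, has K+t-2 zeros on A and attains the bound. *)

Section LocalRing.
Variable R : finComUnitRingType.

Lemma nonunit_in_max_ideal (M : {set R}) :
  (forall I : {set R}, Defs.proper_ideal I -> I \subset M) ->
  forall x : R, x \isn't a GRing.unit -> x \in M.
Proof.
move=> hmax x hx; pose I := [set x * y | y : R].
have hI : Defs.proper_ideal I.
  split; [split; [|split]|].
  - by apply/imsetP; exists 0 => //; rewrite mulr0.
  - move=> _ _ /imsetP[a _ ->] /imsetP[b _ ->].
    by apply/imsetP; exists (a + b) => //; rewrite mulrDr.
  - move=> c _ /imsetP[a _ ->].
    by apply/imsetP; exists (c * a) => //; rewrite mulrCA.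
  - apply/imsetP => -[y _ xy1]; move/negP: hx; apply.
    by apply/unitrPr; exists y; rewrite -xy1.
by apply: (subsetP (hmax I hI)); apply/imsetP; exists 1 => //; rewrite mulr1.
Qed.

(* The non-units form the maximal ideal, which would then contain u = a - (a - u). *)
Lemma local_subr_unit (a u : R) :
  local_ring R -> a \isn't a GRing.unit -> u \is a GRing.unit ->
  (a - u) \is a GRing.unit.
Proof.
move=> [M [hM hmax]] ha hu; apply/negPn/negP => hau.
have aM := nonunit_in_max_ideal hmax ha.
have auM := nonunit_in_max_ideal hmax hau.
case: hM => [[_ [hadd hmul]] /negP]; apply.
have uM : u \in M.
  have -> : u = a + (-1) * (a - u) by rewrite mulN1r opprB addrC subrK.
  by apply: hadd => //; apply: hmul.
by rewrite -(mulVr hu); apply: hmul.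
Qed.

Lemma well_conditioned_subr_unit (A : {set R}) :
  local_ring R -> well_conditioned A ->
  {in A &, forall x y, x != y -> (x - y) \is a GRing.unit}.
Proof.
move=> hloc [[_ hs] | [a aA [[hu hs] hz]]] x y xA yA xy; first exact: hs.
have anu : a \isn't a GRing.unit.
  case: hz => [[b [bn0 hab]] | ->]; last by rewrite unitr0.
  apply: contraNN bn0 => ua; by rewrite -(mulKr ua b) hab mulr0.
have inAa z : z \in A -> z != a -> z \in A :\ a by move=> zA za; rewrite !inE za.
have [xa | xa] := eqVneq x a; have [ya | ya] := eqVneq y a.
- by rewrite xa ya eqxx in xy.
- by rewrite xa; apply: local_subr_unit => //; apply/hu/inAa.
- by rewrite ya -opprB unitrN; apply: local_subr_unit => //; apply/hu/inAa.
- by apply: hs => //; apply: inAa.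
Qed.

End LocalRing.

Lemma card_bigcup_disjoint (I T : finType) (F : I -> {set T}) :
  (forall i j, i != j -> [disjoint F i & F j]) ->
  #|\bigcup_i F i| = (\sum_i #|F i|)%N.
Proof.
move=> hdisj; elim: (index_enum I) (index_enum_uniq I) => [|i s IH] /=.
  by rewrite !big_nil cards0.
case/andP=> i_notin_s us; rewrite !big_cons -IH //; apply/eqP.
rewrite (leq_card_setU _ _).2 big_seq.
apply: (big_ind (fun B : {set T} => [disjoint F i & B])) => [||j js].
- by rewrite -setI_eq0 setI0.
- by move=> B1 B2; rewrite -!setI_eq0 setIUr => /eqP-> /eqP->; rewrite setU0.
- by apply: hdisj; apply: contraNneq i_notin_s => ->.
Qed.

Lemma max_poly_roots_subr_unit (R : comUnitRingType) (f : {poly R}) (s : seq R) :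
  f != 0 -> uniq s -> {in s &, forall x y, x != y -> (x - y) \is a GRing.unit} ->
  all (root f) s -> (size s < size f)%N.
Proof.
move=> fn0 us hU rs; apply: max_ring_poly_roots => //.
elim: s us hU {rs} => [|x s IH] //= /andP[xs us] hU.
apply/andP; split; last by apply: IH => // y z ys zs; apply: hU; rewrite inE ?ys ?zs orbT.
apply/allP => y ys; rewrite /diff_roots mulrC eqxx /=.
by apply: hU; rewrite ?inE ?ys ?eqxx ?orbT //; apply: contraNneq xs => <-.
Qed.

Lemma root_prod_XsubC_mem (R : comNzRingType) (s : seq R) x :
  x \in s -> root (\prod_(z <- s) ('X - z%:P)) x.
Proof. by move=> xs; rewrite /root horner_prod (big_rem x) //= hornerXsubC subrr mul0r. Qed.

Lemma size_exp_lead_unit (R : comUnitRingType) (g : {poly R}) j :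
  lead_coef g \is a GRing.unit ->
  size (g ^+ j) = ((size g).-1 * j).+1 /\ lead_coef (g ^+ j) = lead_coef g ^+ j.
Proof.
move=> lu; have g_gt0 : (0 < size g)%N.
  by rewrite size_poly_gt0 -lead_coef_eq0; apply: contraTneq lu => ->; rewrite unitr0.
elim: j => [|j [IHs IHl]]; first by rewrite !expr0 size_poly1 lead_coef1 muln0.
have nz : lead_coef (g ^+ j) * lead_coef g != 0.
  by rewrite IHl -exprSr; apply: contraTneq (unitrX j.+1 lu) => ->; rewrite unitr0.
rewrite exprSr size_proper_mul // lead_coef_proper_mul // IHs IHl -exprSr.
by split=> //; rewrite mulnS; lia.
Qed.

Section EvaluationPolynomials.
Variables (R : finComUnitRingType) (r t : nat).
Implicit Types (g : {poly R}) (a b : 'I_r * 'I_t -> R).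

Lemma fpoly_pair g a :
  fpoly g a = \sum_(p : 'I_r * 'I_t) a p *: (g ^+ p.2 * 'X^(p.1)).
Proof. by rewrite /fpoly pair_big /=; apply: eq_bigr => -[i j]. Qed.

Lemma eq_fpoly g a b : a =1 b -> fpoly g a = fpoly g b.
Proof. by move=> eab; rewrite !fpoly_pair; apply: eq_bigr => p _; rewrite eab. Qed.

Lemma horner_fpoly g a y :
  (fpoly g a).[y] = \sum_(p : 'I_r * 'I_t) a p * (g.[y] ^+ p.2 * y ^+ p.1).
Proof.
rewrite fpoly_pair horner_sum; apply: eq_bigr => p _.
by rewrite hornerZ hornerM hornerXn horner_exp.
Qed.

Lemma horner_fpoly_polyC g a y : (fpoly g a).[y] = (fpoly (g.[y])%:P a).[y].
Proof. by rewrite !horner_fpoly; apply: eq_bigr => p _; rewrite hornerC. Qed.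

Lemma fpolyB g a b : fpoly g (fun p => a p - b p) = fpoly g a - fpoly g b.
Proof. by rewrite !fpoly_pair -sumrB; apply: eq_bigr => p _; rewrite scalerBl. Qed.

Lemma size_fpoly g a : (size (fpoly g a) <= (size g).-1 * t.-1 + r)%N.
Proof.
rewrite fpoly_pair; apply: (big_ind (fun q : {poly R} => size q <= (size g).-1 * t.-1 + r)%N).
- by rewrite size_poly0.
- by move=> p q hp hq; apply: leq_trans (size_polyD _ _) _; rewrite geq_max hp hq.
move=> [i j] _ /=; apply: leq_trans (size_scale_leq _ _) _.
apply: leq_trans (size_polyMleq _ _) _; rewrite size_polyXn.
have := size_poly_exp_leq g j.
have : ((size g).-1 * j <= (size g).-1 * t.-1)%N.
  by rewrite leq_mul2l; have := ltn_ord j; lia.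
have := ltn_ord i; move: ((size g).-1 * j)%N ((size g).-1 * t.-1)%N => x y; lia.
Qed.

(* The monomial g^j X^i has degree j(r+1) + i, and these degrees are pairwise distinct;
   the term of largest degree with a nonzero coefficient therefore survives in f_a. *)
Lemma fpoly_eq0 g a :
  size g = r.+2 -> lead_coef g \is a GRing.unit -> fpoly g a = 0 -> forall p, a p = 0.
Proof.
move=> sg lu fa0 p0; apply/eqP/negPn/negP => ap0.
pose D (p : 'I_r * 'I_t) := (p.2 * r.+1 + p.1)%N.
have Dinj : injective D.
  move=> [i j] [i' j']; rewrite /D /= => e.
  have hi := leqW (ltn_ord i); have hi' := leqW (ltn_ord i').
  have e1 := congr1 (divn^~ r.+1) e; have e2 := congr1 (modn^~ r.+1) e.
  rewrite /= !divnMDl // !divn_small // !addn0 in e1.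
  rewrite /= !modnMDl !modn_small // in e2.
  by congr pair; apply: val_inj.
have [m am mmax] := @arg_maxnP _ p0 (fun p => a p != 0) D ap0.
have coef_top : (fpoly g a)`_(D m) = a m * lead_coef g ^+ m.2.
  rewrite fpoly_pair coef_sum (bigD1 m) //= big1 ?addr0.
    rewrite coefZ coefMXn ltnNge leq_addl /= addnK.
    have [sz ld] := size_exp_lead_unit m.2 lu.
    by rewrite -ld lead_coefE sz sg /= mulnC.
  move=> q qm; rewrite coefZ; have [->|aq] := eqVneq (a q) 0; first by rewrite mul0r.
  have Dq : (D q < D m)%N.
    have le_qm : (D q <= D m)%N := mmax q aq.
    by rewrite ltn_neqAle le_qm andbT; apply: contra_neq qm; exact: Dinj.
  rewrite coefMXn; case: ifP => _; first by rewrite mulr0.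
  have [sz _] := size_exp_lead_unit q.2 lu.
  by rewrite nth_default ?mulr0 // sz sg /=; move: Dq; rewrite /D; lia.
move: coef_top; rewrite fa0 coef0 => /esym/(congr1 (fun x => x / lead_coef g ^+ m.2)).
by rewrite mulrK ?unitrX // mul0r => am0; rewrite am0 eqxx in am.
Qed.

Lemma horner_fpoly_coefM g (G F : {poly R}) y :
  (size G <= r)%N -> (size F <= t)%N ->
  (fpoly g (fun p : 'I_r * 'I_t => G`_p.1 * F`_p.2)).[y] = G.[y] * F.[g.[y]].
Proof.
move=> sG sF; rewrite horner_fpoly (horner_coef_wide y sG) (horner_coef_wide g.[y] sF).
rewrite mulr_suml (eq_bigr _ (fun i _ => mulr_sumr _ _ _ _)) pair_big /=.
by apply: eq_bigr => -[i j] _ /=; ring.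
Qed.

Lemma exists_fpoly_roots g (bs vs : seq R) :
  (0 < r)%N -> (0 < t)%N -> size bs = r.-1 -> size vs = t.-1 ->
  exists2 a : {ffun 'I_r * 'I_t -> R}, a != 0 &
    forall x, (x \in bs) || (g.[x] \in vs) -> root (fpoly g a) x.
Proof.
move=> r_gt0 t_gt0 size_bs size_vs.
pose G := \prod_(z <- bs) ('X - z%:P); pose F := \prod_(z <- vs) ('X - z%:P).
have size_G : size G = r by rewrite size_prod_XsubC size_bs prednK.
have size_F : size F = t by rewrite size_prod_XsubC size_vs prednK.
exists [ffun p : 'I_r * 'I_t => G`_p.1 * F`_p.2] => [|x].
  have r'_lt_r : (r.-1 < r)%N by rewrite prednK.
  have t'_lt_t : (t.-1 < t)%N by rewrite prednK.
  apply/eqP => /ffunP/(_ (Ordinal r'_lt_r, Ordinal t'_lt_t)).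
  rewrite !ffunE /= -{1}size_G -{1}size_F -!lead_coefE.
  by rewrite !(monicP (monic_prod_XsubC _ _ _)) mulr1 => /eqP; rewrite oner_eq0.
rewrite /root (eq_fpoly g (b := fun p : 'I_r * 'I_t => G`_p.1 * F`_p.2)) => [|p]; last first.
  by rewrite ffunE.
rewrite horner_fpoly_coefM ?size_G ?size_F // => /orP[xbs | gxvs].
  by rewrite (rootP (root_prod_XsubC_mem xbs)) mul0r.
by rewrite (rootP (root_prod_XsubC_mem gxvs)) mulr0.
Qed.

End EvaluationPolynomials.

Section PolynomialLRC.
Variables (R : finComUnitRingType) (r l t : nat) (Ab : 'I_l -> {set R}) (g : {poly R}).

Local Notation n := (r.+1 * l)%N.
Local Notation K := (r * t)%N.
Local Notation A := (\bigcup_(i < l) Ab i).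

Hypothesis Ab_disjoint : forall i j, i != j -> [disjoint Ab i & Ab j].
Hypothesis card_Ab : forall i, #|Ab i| = r.+1.
Hypothesis A_subr_unit : {in A &, forall x y, x != y -> (x - y) \is a GRing.unit}.
Hypothesis size_g : size g = r.+2.
Hypothesis lead_g_unit : lead_coef g \is a GRing.unit.
Hypothesis g_const_on_Ab : forall i, {in Ab i &, forall x y, g.[x] = g.[y]}.
Hypothesis r_gt0 : (0 < r)%N.
Hypothesis t_gt0 : (0 < t)%N.
Hypothesis t_le_l : (t <= l)%N.

Definition pos (k : 'I_n) : R := nth 0 (enum A) k.
Definition evc (f : {poly R}) : 'rV[R]_n := \row_(k < n) f.[pos k].
Definition code : {set 'rV[R]_n} := [set evc (fpoly g a) | a : {ffun 'I_r * 'I_t -> R}].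

Lemma card_A : #|A| = n.
Proof.
rewrite card_bigcup_disjoint //; under eq_bigr do rewrite card_Ab.
by rewrite sum_nat_const card_ord mulnC.
Qed.

Lemma size_enum_A : size (enum A) = n.
Proof. by rewrite -cardE card_A. Qed.

Lemma pos_in_A k : pos k \in A.
Proof. by rewrite /pos -mem_enum mem_nth // size_enum_A. Qed.

Lemma pos_inj : injective pos.
Proof.
move=> k1 k2 e; apply/val_inj/eqP.
by rewrite -(@nth_uniq _ 0 (enum A)) ?size_enum_A ?enum_uniq ?ltn_ord //; apply/eqP.
Qed.

Lemma card_pos_preim (S : {set R}) : S \subset A -> #|[set k | pos k \in S]| = #|S|.
Proof.
move=> sSA; rewrite -(card_imset _ pos_inj); apply: eq_card => x.
apply/imsetP/idP => [[k + ->]|xS]; first by rewrite inE.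
have xA : x \in enum A by rewrite mem_enum (subsetP sSA).
have k_lt : (index x (enum A) < n)%N by rewrite -size_enum_A index_mem.
by exists (Ordinal k_lt); rewrite ?inE /pos nth_index.
Qed.

Lemma card_zeros_lt_size (f : {poly R}) (Z : {set 'I_n}) :
  f != 0 -> {in Z, forall k, root f (pos k)} -> (#|Z| < size f)%N.
Proof.
move=> fn0 hZ; rewrite cardE -(size_map pos).
apply: max_poly_roots_subr_unit => //.
- by rewrite (map_inj_uniq pos_inj) enum_uniq.
- by move=> x y /mapP[k _ ->] /mapP[k' _ ->]; apply: A_subr_unit; apply: pos_in_A.
- by apply/allP => _ /mapP[k kZ ->]; apply: hZ; rewrite -mem_enum.
Qed.

Lemma size_fpoly_g (a : 'I_r * 'I_t -> R) : (size (fpoly g a) <= K + t - 1)%N.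
Proof.
apply: leq_trans (size_fpoly g a) _; rewrite size_g /=.
have := mulSn r t.-1; have := mulnS r t.-1; rewrite prednK //.
move: (r * t.-1)%N (r.+1 * t.-1)%N => x y; lia.
Qed.

Lemma K_add_t_le_n : (K + t <= n)%N.
Proof. by rewrite addnC -mulSn leq_mul2l t_le_l orbT. Qed.

Lemma fpoly_vanishing_eq0 (a : 'I_r * 'I_t -> R) :
  (forall k, (fpoly g a).[pos k] = 0) -> forall p, a p = 0.
Proof.
move=> hz; apply: fpoly_eq0 size_g lead_g_unit _; apply/eqP/negPn/negP => fn0.
have := card_zeros_lt_size (Z := setT) fn0 (fun k _ => introT eqP (hz k)).
have := size_fpoly_g a; have := K_add_t_le_n; rewrite cardsT card_ord; lia.
Qed.

Lemma evc_fpoly_inj : injective (fun a : {ffun 'I_r * 'I_t -> R} => evc (fpoly g a)).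
Proof.
move=> a1 a2 /= e; apply/ffunP => p; apply/eqP; rewrite -subr_eq0; apply/eqP.
apply: (fpoly_vanishing_eq0 (a := fun p => a1 p - a2 p)) => k.
have := congr1 (fun c : 'rV_n => c 0 k) e; rewrite /= !mxE => e'.
by rewrite fpolyB hornerD hornerN e' subrr.
Qed.

Lemma card_code : #|code| = (#|R| ^ K)%N.
Proof. by rewrite card_imset ?card_ffun ?card_prod ?card_ord //; exact: evc_fpoly_inj. Qed.

Lemma code_free : free_code_of_rank code K.
Proof.
have cK : #|{: 'I_r * 'I_t}| = K by rewrite card_prod !card_ord.
pose phi (k : 'I_K) := enum_val (cast_ord (esym cK) k).
pose psi (p : 'I_r * 'I_t) := cast_ord cK (enum_rank p).
have phiK : cancel psi phi by move=> p; rewrite /phi /psi cast_ordK enum_rankK.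
have psiK : cancel phi psi by move=> k; rewrite /phi /psi enum_valK cast_ordKV.
pose B (k : 'I_K) := evc (g ^+ (phi k).2 * 'X^((phi k).1)).
have sumB (u : 'I_K -> R) : \sum_(k < K) u k *: B k = evc (fpoly g (u \o psi)).
  apply/rowP => k'; rewrite summxE !mxE fpoly_pair horner_sum.
  rewrite [RHS](reindex phi); last by exists psi => x _; [apply: psiK | apply: phiK].
  by apply: eq_bigr => k _; rewrite !mxE hornerZ /= psiK.
exists B; split=> [c|u]; last first.
  rewrite sumB => u0 k; rewrite -(psiK k); apply: (fpoly_vanishing_eq0 (a := u \o psi)) => k'.
  by have := congr1 (fun c : 'rV_n => c 0 k') u0; rewrite !mxE.
split=> [/imsetP[a _ ->] | [u ->]].
  by exists (a \o phi); rewrite sumB; congr evc; apply: eq_fpoly => p /=; rewrite phiK.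
rewrite sumB; apply/imsetP; exists [ffun p => u (psi p)] => //.
by congr evc; apply: eq_fpoly => p; rewrite ffunE.
Qed.

Lemma card_block_rest j k :
  pos k \in Ab j -> #|[set k' | pos k' \in Ab j :\ pos k]| = r.
Proof.
move=> kj; rewrite card_pos_preim.
  by have := cardsD1 (pos k) (Ab j); rewrite kj card_Ab add1n => -[].
by apply/subsetP => x /setD1P[_ xj]; apply/bigcupP; exists j.
Qed.

Lemma fpoly_block_recover j k (a : 'I_r * 'I_t -> R) :
  pos k \in Ab j ->
  {in [set k' | pos k' \in Ab j :\ pos k], forall k', (fpoly g a).[pos k'] = 0} ->
  (fpoly g a).[pos k] = 0.
Proof.
move=> kj hS; pose h := fpoly (g.[pos k])%:P a.
have fh x : x \in Ab j -> (fpoly g a).[x] = h.[x].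
  by move=> xj; rewrite horner_fpoly_polyC (g_const_on_Ab xj kj).
rewrite fh //; have [-> | hn0] := eqVneq h 0; first by rewrite horner0.
have size_h_gt : (r < size h)%N.
  rewrite -(card_block_rest kj); apply: card_zeros_lt_size hn0 _ => k' k'S.
  by apply/eqP; rewrite -fh ?hS //; move: k'S; rewrite !inE => /andP[].
have size_h_le : (size h <= r)%N.
  apply: leq_trans (size_fpoly _ a) _.
  by have := size_polyC_leq1 g.[pos k]; case: (size _) => [|[]].
by move: size_h_gt; rewrite ltnNge size_h_le.
Qed.

Lemma recovering_block j k :
  pos k \in Ab j -> recovering_set code k [set k' | pos k' \in Ab j :\ pos k].
Proof.
move=> kj; set S := [set k' | _]; have kS : k \notin S by rewrite !inE eqxx.
split=> //; pose drop_k (c : 'rV[R]_n) := \row_(k' < n) (if k' == k then 0 else c 0 k').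
have -> : puncture code S = drop_k @: puncture code (k |: S).
  rewrite /puncture -[in RHS]imset_comp; apply: eq_imset => c; apply/rowP => k'.
  by rewrite !mxE /= in_setU1; case: eqVneq => [->|]; rewrite ?(negbTE kS).
rewrite card_in_imset // => _ _
  /imsetP[_ /imsetP[a1 _ ->] ->] /imsetP[_ /imsetP[a2 _ ->] ->].
move=> /rowP e; apply/rowP => i; have := e i; rewrite !mxE.
case: eqVneq => [-> _ | //]; rewrite setU11.
apply/eqP; rewrite -subr_eq0 -hornerN -hornerD -fpolyB; apply/eqP.
apply: fpoly_block_recover kj _ => k' k'S; have := e k'.
have k'k : k' != k by apply: contraNneq kS => <-.
by rewrite !mxE (negbTE k'k) in_setU1 k'S orbT fpolyB hornerD hornerN => ->; rewrite subrr.
Qed.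

Lemma code_locality : has_locality code r.
Proof.
move=> k; have /bigcupP[j _ kj] := pos_in_A k.
exists [set k' | pos k' \in Ab j :\ pos k].
by rewrite card_block_rest //; split=> //; apply: recovering_block.
Qed.

Lemma wt_evc (f : {poly R}) : wt (evc f) = (n - #|[set k | root f (pos k)]|)%N.
Proof.
rewrite /wt; have -> : [set k | evc f 0 k != 0] = ~: [set k | root f (pos k)].
  by apply/setP => k; rewrite !inE mxE.
by rewrite cardsCs setCK card_ord.
Qed.

Lemma code_wt_lower c : c \in code -> c != 0 -> (n - K - t + 2 <= wt c)%N.
Proof.
case/imsetP => a _ -> cn0; have fn0 : fpoly g a != 0.
  by apply: contraNneq cn0 => ->; apply/eqP/rowP => k; rewrite !mxE horner0.
have Z_lt : (#|[set k | root (fpoly g a) (pos k)]| < size (fpoly g a))%N.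
  by apply: card_zeros_lt_size => // k; rewrite inE.
have K_gt0 : (0 < K)%N by rewrite muln_gt0 r_gt0.
have := size_fpoly_g a; have := K_add_t_le_n; rewrite wt_evc.
move: Z_lt K_gt0; move: (size _) #|_| => s z; move: K n => k m; lia.
Qed.

Lemma card_first_blocksU m (m_le_l : (m <= l)%N) (j : 'I_l) (B : {set R}) :
  (m <= j)%N -> B \subset Ab j ->
  #|(\bigcup_(w < m) Ab (widen_ord m_le_l w)) :|: B| = (m * r.+1 + #|B|)%N.
Proof.
move=> m_le_j sBj.
have <- : #|\bigcup_(w < m) Ab (widen_ord m_le_l w)| = (m * r.+1)%N.
  rewrite card_bigcup_disjoint => [|w w' ww']; last first.
    by apply: Ab_disjoint; rewrite -val_eqE.
  by under eq_bigr do rewrite card_Ab; rewrite sum_nat_const card_ord.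
apply/eqP; rewrite (leq_card_setU _ _).2.
rewrite disjoint_sym; apply: bigcup_disjoint => w _.
apply: disjointWl sBj _; apply: Ab_disjoint; apply/eqP => /(congr1 val) /= jw.
by move: (ltn_ord w); rewrite -jw ltnNge m_le_j.
Qed.

Lemma wt_evc_le (f : {poly R}) (X : {set R}) :
  X \subset A -> {in X, forall x, root f x} -> (wt (evc f) <= n - #|X|)%N.
Proof.
move=> sXA fX; rewrite wt_evc -(card_pos_preim sXA) leq_sub2l //.
by apply/subset_leq_card/subsetP => k; rewrite !inE => /fX.
Qed.

Lemma code_wt_witness :
  exists2 c, c \in code & c != 0 /\ (wt c <= n - K - t + 2)%N.
Proof.
have t'_lt_l : (t.-1 < l)%N by rewrite prednK.
have t'_le_l := ltnW t'_lt_l; pose jt := Ordinal t'_lt_l.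
pose rep (j : 'I_l) := nth 0 (enum (Ab j)) 0.
have rep_in j : rep j \in Ab j by rewrite -mem_enum mem_nth // -cardE card_Ab.
pose vs := [seq g.[rep (widen_ord t'_le_l w)] | w <- enum 'I_t.-1].
pose bs := take r.-1 (enum (Ab jt)).
have size_vs : size vs = t.-1 by rewrite size_map size_enum_ord.
have size_bs : size bs = r.-1 by rewrite size_take -cardE card_Ab ifT //; lia.
have [a a_nz a_roots] := exists_fpoly_roots g r_gt0 t_gt0 size_bs size_vs.
exists (evc (fpoly g a)); first by apply/imsetP; exists a.
split.
  apply: contraNneq a_nz => fa0; apply/eqP/ffunP => p; rewrite ffunE.
  apply: fpoly_vanishing_eq0 => k.
  by have := congr1 (fun c : 'rV_n => c 0 k) fa0; rewrite !mxE.
have bs_sub : [set z in bs] \subset Ab jt.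
  by apply/subsetP => z; rewrite inE => /mem_take; rewrite mem_enum.
pose X := (\bigcup_(w < t.-1) Ab (widen_ord t'_le_l w)) :|: [set z in bs].
have card_bs : #|[set z in bs]| = r.-1.
  by rewrite cardsE -size_bs; apply/card_uniqP/take_uniq/enum_uniq.
have card_X : (#|X| + 2 = K + t)%N.
  rewrite (card_first_blocksU t'_le_l (leqnn _ : (t.-1 <= jt)%N) bs_sub) card_bs.
  rewrite -(prednK r_gt0) -[in RHS](prednK t_gt0); nia.
apply: leq_trans (wt_evc_le (X := X) _ _) _.
- apply/subsetP => x /setUP[/bigcupP[w _ xw] | /(subsetP bs_sub) xjt]; apply/bigcupP.
    by exists (widen_ord t'_le_l w).
  by exists jt.
- move=> x /setUP[/bigcupP[w _ xw] | xbs]; apply: a_roots; last by rewrite -[x \in bs]inE xbs.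
  rewrite (g_const_on_Ab xw (rep_in _)); apply/orP; right.
  by apply/mapP; exists w; rewrite ?mem_enum.
- by move: card_X; move: #|X| K n => x k m; lia.
Qed.

Lemma code_min_distance : min_distance_is code (n - K - t + 2).
Proof.
split; last exact: code_wt_lower.
have [c cC [cn0 wt_le]] := code_wt_witness.
by exists c => //; split=> //; apply/eqP; rewrite eqn_leq wt_le code_wt_lower.
Qed.

End PolynomialLRC.

Theorem mainTheorem6 (R : finComUnitRingType) (r l t : nat)
  (Ab : 'I_l -> {set R}) (g : {poly R}) :
  chain_ring R -> (1 <= r)%N -> (1 <= l)%N ->
  (forall i j, i != j -> [disjoint Ab i & Ab j]) ->
  (forall i, #|Ab i| = r.+1) ->
  well_conditioned (\bigcup_(i < l) Ab i) ->
  good_poly r Ab g ->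
  (1 <= t <= l)%N ->
  let n := (r.+1 * l)%N in
  let K := (r * t)%N in
  let A := \bigcup_(i < l) Ab i in
  let pos := fun k : 'I_n => nth 0 (enum A) k in
  let C := [set \row_(k < n) (fpoly g a).[pos k] | a : {ffun 'I_r * 'I_t -> R}] in
  [/\ free_code_of_rank C K,
      #|C| = (#|R| ^ K)%N,
      (forall (j : 'I_l) (k : 'I_n), pos k \in Ab j ->
         recovering_set C k [set k' | pos k' \in Ab j :\ pos k]),
      has_locality C r
    & min_distance_is C (n - K - K %/ r + 2)%N].
Proof.
move=> [local_R _] r_gt0 _ Ab_disjoint card_Ab A_wc [size_g [lead_g_unit g_const_on_Ab]].
case/andP=> t_gt0 t_le_l n K A pos C.
have A_subr_unit := well_conditioned_subr_unit local_R A_wc.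
rewrite mulKn //; split.
- exact: code_free.
- exact: card_code.
- exact: recovering_block.
- exact: code_locality.
- exact: code_min_distance.
Qed.
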